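(* Let $n\equiv 1\pmod 4$. Let $I_1,I_2\subseteq\{0,1,\dots,(n-1)/2\}$ be such that $\{2i,2i+1\}\cap\{j,n-j\}=\emptyset$ for all $i\in I_1$ and $j\in I_2$, and let $$D=\bigcup_{i\in I_1}\{2i,2i+1\}\cup\bigcup_{j\in I_2}\{j,n-j\}.$$ Then the hypercube $Q_n$ admits a $D$-magic labeling.
   Context: The hypercube $Q_n$ has vertex set $\mathbb{F}_2^n$, two vertices adjacent iff they differ in exactly one coordinate; $d(x,y)$ is the graph distance (the Hamming distance). For a set of distances $D$ and a vertex $x$ of a graph $G$, $N_D(x)=\{y\in V(G): d(x,y)\in D\}$. For a graph $G$ of order $N$, a $D$-magic labeling is a bijection $f:V(G)\to\{1,\dots,N\}$ for which there exists a constant $k$ with $\sum_{y\in N_D(x)}f(y)=k$ for every vertex $x$. *)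

From mathcomp Require Import all_boot.
Set Implicit Arguments. Unset Strict Implicit. Unset Printing Implicit Defensive.

Definition cube (n : nat) := {ffun 'I_n -> bool}.

(* Hamming distance = graph distance in Q_n. *)
Definition hdist (n : nat) (x y : cube n) : nat := #|[set i | x i != y i]|.

Definition distNbhd (n : nat) (D : pred nat) (x : cube n) : {set cube n} :=
  [set y | D (hdist x y)].

Definition D_magic (n : nat) (D : pred nat) (f : cube n -> nat) : Prop :=
  injective f /\ (forall x, 1 <= f x <= #|{: cube n}|) /\
  exists k : nat, forall x, \sum_(y in distNbhd D x) f y = k.

Definition theD (n : nat) (I1 I2 : pred nat) : pred nat :=
  fun d => [|| [exists i : 'I_n.+1, I1 i && ((d == 2 * i) || (d == 2 * i + 1))]
             | [exists j : 'I_n.+1, I2 j && ((d == j) || (d == n - j))]].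

From mathcomp Require Import all_boot fingroup perm zify.
Set Implicit Arguments. Unset Strict Implicit. Unset Printing Implicit Defensive.

(* Write n = 4m + 1 and label y by 1 + \sum_k 2^k <s_k, y> for a basis (s_k) of
   F_2^n; this is a bijection onto {1, ..., 2^n}, and the D-neighbourhood sum
   at x is \sum_k 2^k #{z : wt z \in D, <s_k, x + z> = 1}.  It is therefore
   constant as soon as, for each k, exactly half of the z with wt z \in D
   satisfy <s_k, z> = 1.  This holds whenever wt s_k = (n + 1) / 2, an odd
   number, via an involution on such z that flips <s_k, z>.  Complementing z
   works on the weights {j, n - j}.  On the weights {2i, 2i + 1}, pair the ones
   of s_k but one, p, with its zeros: either exchange the values of z on a pair
   where they differ, or, if z is constant on every pair (so wt z = z_p mod 2),
   flip z at p.  The indicator of {0, ..., 2m} and its images under suitable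
   transpositions form such a basis. *)

Section BoolVectors.
Variable I : finType.
Implicit Types (x y z s : {ffun I -> bool}) (q r : I).

Definition xorv x y : {ffun I -> bool} := [ffun i => x i (+) y i].
Definition onesv : {ffun I -> bool} := [ffun => true].
Definition unitv q : {ffun I -> bool} := [ffun i => i == q].
Definition wt z : nat := \sum_i z i.
Definition dotv s z : bool := \big[addb/false]_i (s i && z i).

Lemma xorvK x y : xorv x (xorv x y) = y.
Proof. by apply/ffunP=> i; rewrite !ffunE addKb. Qed.

Lemma xorvKr x y : xorv (xorv x y) y = x.
Proof. by apply/ffunP=> i; rewrite !ffunE addbK. Qed.

Lemma dotv_xorr s x y : dotv s (xorv x y) = dotv s x (+) dotv s y.
Proof.
rewrite /dotv -big_split /=; apply: eq_bigr => i _; rewrite ffunE.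
by case: (s i).
Qed.

Lemma dotv_xorl s x y : dotv (xorv x y) s = dotv x s (+) dotv y s.
Proof.
rewrite /dotv -big_split /=; apply: eq_bigr => i _; rewrite ffunE.
by case: (s i); case: (x i); case: (y i).
Qed.

Lemma dotv_unitr s q : dotv s (unitv q) = s q.
Proof.
rewrite /dotv (bigD1 q) //= ffunE eqxx andbT big1 ?addbF // => i iq.
by rewrite ffunE (negbTE iq) andbF.
Qed.

Lemma dotv_unitl z q : dotv (unitv q) z = z q.
Proof.
rewrite /dotv (bigD1 q) //= ffunE eqxx big1 ?addbF // => i iq.
by rewrite ffunE (negbTE iq).
Qed.

Lemma dotv_onesr s : dotv s onesv = odd (wt s).
Proof.
rewrite /wt (big_morph odd oddD (erefl : odd 0 = false)) /dotv.
by apply: eq_bigr => i _; rewrite ffunE andbT oddb.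
Qed.

Lemma wt_xor_ones z : wt z + wt (xorv z onesv) = #|I|.
Proof.
rewrite /wt -big_split -sum1_card; apply: eq_bigr => i _.
by rewrite !ffunE; case: (z i).
Qed.

Lemma wt_xor_swap z q r : z q != z r ->
  wt (xorv z (xorv (unitv q) (unitv r))) = wt z.
Proof.
move=> zqr; have qr : q != r by apply: contraNneq zqr => ->.
rewrite /wt (bigD1 q) // (bigD1 r) /=; last by rewrite eq_sym.
rewrite [in RHS](bigD1 q) // [in RHS](bigD1 r) /=; last by rewrite eq_sym.
rewrite !ffunE eqxx (negbTE qr) eq_sym (negbTE qr) eqxx /= !addnA.
congr (_ + _); first by move: zqr; case: (z q); case: (z r).
apply: eq_bigr => i /andP[iq ir].
by rewrite !ffunE (negbTE iq) (negbTE ir) !addbF.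
Qed.

Lemma wt_xor_unit z q : wt (xorv z (unitv q)) + z q = wt z + ~~ z q.
Proof.
rewrite /wt (bigD1 q) // [in RHS](bigD1 q) //= !ffunE eqxx.
rewrite (eq_bigr (fun i => nat_of_bool (z i))) => [|i iq].
  by case: (z q) => /=; lia.
by rewrite !ffunE (negbTE iq) addbF.
Qed.

Lemma wt_le z : wt z <= #|I|.
Proof. by rewrite -(wt_xor_ones z) leq_addr. Qed.

End BoolVectors.

Arguments onesv {I}.

(* Equivalently wt s = (#|I| + 1) / 2: the involution t pairs the ones of s
   other than p with its zeros. *)
Definition balanced (I : finType) (s : {ffun I -> bool}) : Prop :=
  exists t p, [/\ involutive t, t p = p, s p &
                  forall q, q != p -> s (t q) = ~~ s q].

Section Balanced.
Variables (I : finType) (s : {ffun I -> bool}) (t : I -> I) (p : I).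
Implicit Types z : {ffun I -> bool}.
Hypotheses (tK : involutive t) (tp : t p = p) (sp : s p)
  (s_t : forall q, q != p -> s (t q) = ~~ s q).

Lemma sum_balanced (F : I -> nat) : (forall i, F (t i) = F i) ->
  \sum_i F i = F p + (\sum_(i | s i && (i != p)) F i).*2.
Proof.
move=> Ft; rewrite (bigID s) /= (bigD1 p) //= -addnn addnA; congr (_ + _).
rewrite (reindex_inj (can_inj tK)) /=; apply: eq_big => [i|i _]; last exact: Ft.
have [->|ip] := eqVneq i p; first by rewrite tp sp.
by rewrite s_t // negbK andbT.
Qed.

Lemma card_balanced : #|I|.+1 = (wt s).*2.
Proof.
rewrite -sum1_card (@sum_balanced (fun _ => 1)) // /wt.
rewrite [in RHS](bigD1 p) //= sp big_mkcondl /=.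
by rewrite (eq_bigr (fun i => nat_of_bool (s i))) => [|i _]; [lia | case: (s i)].
Qed.

Lemma odd_wt_balanced : #|I| %% 4 = 1 -> odd (wt s).
Proof.
move=> I4; apply/negPn/negP => even; have := card_balanced.
by rewrite -(odd_double_half (wt s)) (negbTE even) -!muln2; lia.
Qed.

Lemma odd_wt_invariant z : (forall q, z (t q) = z q) -> odd (wt z) = z p.
Proof.
move=> zt; rewrite /wt (@sum_balanced (fun i => nat_of_bool (z i))) //.
  by rewrite oddD odd_double addbF oddb.
by move=> i /=; rewrite zt.
Qed.

Definition balancing_move z : {ffun I -> bool} :=
  if [pick q | z q != z (t q)] is Some q then xorv (unitv q) (unitv (t q))
  else unitv p.

Lemma balancing_move_t z i : balancing_move z (t i) = balancing_move z i.
Proof.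
have t_eq q : (t i == q) = (i == t q) by rewrite -{1}(tK q) (can_eq tK).
rewrite /balancing_move; case: pickP => [q _|_]; rewrite !ffunE !t_eq ?tp //.
by rewrite tK addbC.
Qed.

Lemma balancing_move_xor z :
  balancing_move (xorv z (balancing_move z)) = balancing_move z.
Proof.
rewrite {1}/balancing_move.
rewrite (eq_pick (_ : _ =1 [pred q | z q != z (t q)])) // => q /=.
rewrite !ffunE balancing_move_t.
by case: (z q); case: (z (t q)); case: (balancing_move z q).
Qed.

Lemma dotv_balancing_move z : dotv s (balancing_move z).
Proof.
rewrite /balancing_move; case: pickP => [q zq|_]; last by rewrite dotv_unitr.
have qp : q != p by apply: contraNneq zq => ->; rewrite tp.
by rewrite dotv_xorr !dotv_unitr s_t //; case: (s q).
Qed.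

Lemma half_wt_balancing_move z :
  (wt (xorv z (balancing_move z)))./2 = (wt z)./2.
Proof.
rewrite /balancing_move; case: pickP => [q zq|zt]; first by rewrite wt_xor_swap.
have /odd_wt_invariant zp : forall q, z (t q) = z q.
  by move=> q; have := zt q; case: (z q); case: (z (t q)).
have := wt_xor_unit z p; rewrite -zp.
case: (odd (wt z)) (odd_double_half (wt z)) => /= wtz; lia.
Qed.

Variables A H : pred nat.
Hypotheses (I4 : #|I| %% 4 = 1)
  (A_compl : forall w, A w -> A (#|I| - w))
  (HA : forall w, H w./2 -> ~~ A w).

Definition flip_dotv z : {ffun I -> bool} :=
  if A (wt z) then xorv z onesv else xorv z (balancing_move z).

Lemma flip_dotvP z : H (wt z)./2 || A (wt z) ->
  [/\ H (wt (flip_dotv z))./2 || A (wt (flip_dotv z)),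
      flip_dotv (flip_dotv z) = z & dotv s (flip_dotv z) = ~~ dotv s z].
Proof.
rewrite /flip_dotv; case: ifPn => [Az _ | nAz /orP[Hz|] //].
  have wt_ones : wt (xorv z onesv) = #|I| - wt z by have := wt_xor_ones z; lia.
  have Aw : A (wt (xorv z onesv)).
    by rewrite wt_ones A_compl.
  by rewrite Aw orbT xorvKr dotv_xorr dotv_onesr odd_wt_balanced ?addbT.
have Hw : H (wt (xorv z (balancing_move z)))./2.
  by rewrite half_wt_balancing_move.
rewrite Hw (negbTE (HA Hw)) balancing_move_xor xorvKr.
by rewrite dotv_xorr dotv_balancing_move addbT.
Qed.

Lemma sum_dotv_xor x :
  \sum_(z | H (wt z)./2 || A (wt z)) dotv s (xorv x z) =
  \sum_(z | H (wt z)./2 || A (wt z)) dotv s z.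
Proof.
under eq_bigr do rewrite dotv_xorr.
case: (dotv s x) => //=.
rewrite (reindex_onto flip_dotv flip_dotv) => [|z /flip_dotvP[] //].
apply: eq_big => [z | z /andP[/flip_dotvP[_ _] + /eqP ffz]].
  by apply/andP/idP => [[/flip_dotvP[+ _ _] /eqP ffz] | /flip_dotvP[-> -> _] //];
     rewrite ffz.
by rewrite ffz => ->.
Qed.

End Balanced.

Lemma balanced_perm (I : finType) (sigma : {perm I}) (s : {ffun I -> bool}) :
  balanced s -> balanced [ffun i => s (sigma i)].
Proof.
case=> t [p [tK tp sp s_t]].
exists (fun i => (sigma^-1)%g (t (sigma i))), ((sigma^-1)%g p); split.
- by move=> i; rewrite permKV tK permK.
- by rewrite permKV tp.
- by rewrite ffunE permKV.
- move=> q qp; rewrite !ffunE permKV s_t //.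
  by apply: contraNneq qp => <-; rewrite permK.
Qed.

Lemma ffun_tperm (I : finType) (s : {ffun I -> bool}) q r : s q != s r ->
  [ffun i => s (tperm q r i)] = xorv s (xorv (unitv q) (unitv r)).
Proof.
move=> sqr; have qr : q != r by apply: contraNneq sqr => ->.
apply/ffunP => i; rewrite !ffunE.
case: tpermP => [->|->|/eqP/negbTE iq /eqP/negbTE ir].
- by rewrite eqxx (negbTE qr); move: sqr; case: (s q); case: (s r).
- by rewrite eqxx eq_sym (negbTE qr); move: sqr; case: (s q); case: (s r).
- by rewrite iq ir !addbF.
Qed.

Lemma binary_lt n (b : 'I_n -> bool) : \sum_(k < n) 2 ^ k * b k < 2 ^ n.
Proof.
elim: n b => [|n IH] b; first by rewrite big_ord0.
rewrite big_ord_recr /= expnS.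
by have := IH (fun k => b (widen_ord (leqnSn n) k)); case: (b _) => /=; lia.
Qed.

Lemma binary_inj n (b c : 'I_n -> bool) :
  \sum_(k < n) 2 ^ k * b k = \sum_(k < n) 2 ^ k * c k -> b =1 c.
Proof.
elim: n b c => [|n IH] b c; first by move=> _ [].
rewrite !big_ord_recr /=.
have ltX := binary_lt (fun k => b (widen_ord (leqnSn n) k)).
have ltY := binary_lt (fun k => c (widen_ord (leqnSn n) k)).
set X := \sum_(k < n) _ in ltX *; set Y := \sum_(k < n) _ in ltY * => E.
have bc_max : b ord_max = c ord_max.
  by move: E; case: (b _); case: (c _) => //=; lia.
have /IH bc : X = Y by move: E; rewrite bc_max; lia.
move=> k; case: (unliftP ord_max k) => [j ->|-> //].
by have := bc j; congr (b _ = c _); apply: ord_inj; rewrite lift_max.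
Qed.

Section Basis.
Variable m : nat.
Local Notation n := (4 * m).+1.

Definition low_half : {ffun 'I_n -> bool} := [ffun l : 'I_n => l <= 2 * m].

Definition half_shift (l : 'I_n) : 'I_n :=
  inord (if l == 0 :> nat then 0
         else if l <= 2 * m then l + 2 * m else l - 2 * m).

Lemma half_shiftK : involutive half_shift.
Proof.
move=> l; apply: ord_inj; have l_lt := ltn_ord l.
rewrite /half_shift !inordK; do ?[case: ifP => /=]; lia.
Qed.

Lemma half_shift0 : half_shift ord0 = ord0.
Proof. by apply: ord_inj; rewrite /half_shift inordK. Qed.

Lemma low_half0 : low_half ord0.
Proof. by rewrite ffunE. Qed.

Lemma low_half_shift q : q != ord0 -> low_half (half_shift q) = ~~ low_half q.
Proof.
move=> q0; have {}q0 : q != 0 :> nat := q0; have q_lt := ltn_ord q.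
rewrite !ffunE /half_shift inordK; do ?[case: ifP => /=]; lia.
Qed.

Lemma low_half_balanced : balanced low_half.
Proof.
exists half_shift, ord0.
by split; [exact: half_shiftK | exact: half_shift0 | exact: low_half0 |
           exact: low_half_shift].
Qed.

Lemma odd_wt_low_half : odd (wt low_half).
Proof.
apply: (odd_wt_balanced half_shiftK half_shift0 low_half0 low_half_shift).
by rewrite card_ord; lia.
Qed.

Definition mate (k : 'I_n) : 'I_n :=
  inord (if 0 < k <= 2 * m then k + 2 * m else 0).

Definition basisv (k : 'I_n) : {ffun 'I_n -> bool} :=
  [ffun l => low_half (tperm k (mate k) l)].

Lemma basisv_balanced k : balanced (basisv k).
Proof. exact: balanced_perm low_half_balanced. Qed.

Lemma basisv0 : basisv ord0 = low_half.
Proof.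
have mate0 : mate ord0 = ord0 by apply: ord_inj; rewrite /mate inordK.
rewrite /basisv mate0.
by apply/ffunP => l; rewrite ffunE tperm1 perm1.
Qed.

Lemma basisv_xor k : k != ord0 ->
  basisv k = xorv low_half (xorv (unitv k) (unitv (mate k))).
Proof.
move=> k0; have {}k0 : k != 0 :> nat := k0; have k_lt := ltn_ord k.
apply: ffun_tperm; rewrite !ffunE /mate inordK; do ?[case: ifP => /=]; lia.
Qed.

Lemma mate_mate k : mate (mate k) = ord0.
Proof.
apply: ord_inj; have k_lt := ltn_ord k.
rewrite /mate !inordK; do ?[case: ifP => /=]; lia.
Qed.

Lemma dotv_basisv_inj y y' :
  (forall k, dotv (basisv k) y = dotv (basisv k) y') -> y = y'.
Proof.
move=> E; set z := xorv y y'.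
have z_perp k : dotv (basisv k) z = false by rewrite dotv_xorr E addbb.
have low_z : dotv low_half z = false by rewrite -basisv0 z_perp.
have z_mate k : k != ord0 -> z k = z (mate k).
  move=> k0; have := z_perp k.
  rewrite basisv_xor // !dotv_xorl !dotv_unitl low_z.
  by case: (z k); case: (z (mate k)).
have z_const l : z l = z ord0.
  have [->|l0] := eqVneq l ord0; first done.
  have [<-|ml0] := eqVneq (mate l) ord0; first exact: z_mate.
  by rewrite z_mate // z_mate // mate_mate.
have z0 : z ord0 = false.
  apply: contraFF low_z => z0.
  have -> : z = onesv by apply/ffunP => l; rewrite z_const z0 ffunE.
  by rewrite dotv_onesr odd_wt_low_half.
apply/ffunP => l; have := z_const l; rewrite z0 /z ffunE.
by case: (y l); case: (y' l).
Qed.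

End Basis.

Definition compl_part n (I2 : pred nat) : pred nat :=
  fun w => [exists j : 'I_n.+1, I2 j && ((w == j) || (w == n - j))].

Lemma theDE n (I1 I2 : pred nat) w :
  w <= n -> theD n I1 I2 w = I1 w./2 || compl_part n I2 w.
Proof.
move=> wn; congr (_ || _); apply/existsP/idP => [[i /andP[I1i wi]] | I1w].
  by have -> : w./2 = i by lia.
by exists (inord w./2); rewrite inordK; [rewrite I1w; lia | lia].
Qed.

Lemma compl_part_compl n (I2 : pred nat) w :
  compl_part n I2 w -> compl_part n I2 (n - w).
Proof.
case/existsP => j /andP[I2j wj]; apply/existsP; exists j; rewrite I2j.
have := ltn_ord j; lia.
Qed.

Lemma half_notin_compl_part n (I1 I2 : pred nat) :
  (forall i j, I1 i -> I2 j ->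
     [/\ 2 * i != j, 2 * i != n - j, 2 * i + 1 != j & 2 * i + 1 != n - j]) ->
  forall w, I1 w./2 -> ~~ compl_part n I2 w.
Proof.
move=> HI w I1w; apply/existsP => -[j /andP[I2j wj]].
have [] := HI _ _ I1w I2j; lia.
Qed.

Lemma sum_theD_dotv_xor n (I1 I2 : pred nat) (s x : cube n) :
  n %% 4 = 1 ->
  (forall i j, I1 i -> I2 j ->
     [/\ 2 * i != j, 2 * i != n - j, 2 * i + 1 != j & 2 * i + 1 != n - j]) ->
  balanced s ->
  \sum_(z | theD n I1 I2 (wt z)) dotv s (xorv x z) =
  \sum_(z | theD n I1 I2 (wt z)) dotv s z.
Proof.
move=> n4 HI [t [p [tK tp sp s_t]]].
have theD_wt (z : cube n) :
    theD n I1 I2 (wt z) = I1 (wt z)./2 || compl_part n I2 (wt z).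
  by rewrite theDE //; have := wt_le z; rewrite card_ord.
rewrite !(eq_bigl _ _ theD_wt).
apply: (sum_dotv_xor tK tp sp s_t); rewrite ?card_ord //.
  exact: compl_part_compl.
exact: half_notin_compl_part.
Qed.

Lemma hdist_xor n (x z : cube n) : hdist x (xorv x z) = wt z.
Proof.
rewrite /hdist /wt -sum1_card big_mkcond /=; apply: eq_bigr => i _.
by rewrite inE !ffunE; case: (x i); case: (z i).
Qed.

Lemma sum_distNbhd n D (x : cube n) (F : cube n -> nat) :
  \sum_(y in distNbhd D x) F y = \sum_(z | D (wt z)) F (xorv x z).
Proof.
rewrite (reindex_inj (can_inj (xorvK x))).
by apply: eq_bigl => z; rewrite inE hdist_xor.
Qed.

Section Label.
Variable m : nat.
Local Notation n := (4 * m).+1.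

Definition basis_label (y : cube n) : nat :=
  (\sum_(k < n) 2 ^ k * dotv (basisv k) y).+1.

Lemma basis_label_inj : injective basis_label.
Proof. by move=> y y' [/binary_inj E]; apply: dotv_basisv_inj. Qed.

Lemma basis_label_range y : 1 <= basis_label y <= #|{: cube n}|.
Proof. by rewrite card_ffun card_bool card_ord ltnS binary_lt. Qed.

Lemma sum_basis_label_xor (P : pred (cube n)) x :
  (forall k, \sum_(z | P z) dotv (basisv k) (xorv x z) =
             \sum_(z | P z) dotv (basisv k) z) ->
  \sum_(z | P z) basis_label (xorv x z) = \sum_(z | P z) basis_label z.
Proof.
move=> dotv_xor; rewrite /basis_label; under eq_bigr do rewrite -addn1.
under [RHS]eq_bigr do rewrite -addn1.
rewrite !big_split /= exchange_big [in RHS]exchange_big /=; congr (_ + _).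
by apply: eq_bigr => k _; rewrite -!big_distrr /= dotv_xor.
Qed.

End Label.

Theorem theorem3p9 (n : nat) (I1 I2 : pred nat) :
  n %% 4 = 1 ->
  (forall i, I1 i -> i <= (n - 1) %/ 2) ->
  (forall j, I2 j -> j <= (n - 1) %/ 2) ->
  (forall i j, I1 i -> I2 j ->
     [/\ 2 * i != j, 2 * i != n - j, 2 * i + 1 != j & 2 * i + 1 != n - j]) ->
  exists f : cube n -> nat, D_magic (theD n I1 I2) f.
Proof.
move=> n4 _ _ HI.
have [m n_eq] : exists m, n = (4 * m).+1.
  by exists (n %/ 4); rewrite {1}(divn_eq n 4) n4 addn1 mulnC.
subst n; exists (@basis_label m); split; first exact: basis_label_inj.
split; first exact: basis_label_range.
exists (\sum_(z | theD (4 * m).+1 I1 I2 (wt z)) @basis_label m z) => x.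
rewrite sum_distNbhd; apply: sum_basis_label_xor => k.
exact: sum_theD_dotv_xor n4 HI (basisv_balanced k).
Qed.
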